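(* Let $A,B\in\mathrm{SL}_2\mathbb{Z}_{\ge0}$ be noncommuting, well oriented, with $\mathrm{tr}(A)<\mathrm{tr}(B)$ and $\mathrm{tr}(AB)=\mathrm{tr}(B^2)$. Fix a (possibly empty) word $w$ and an integer $s\ge0$. Then: (1) $[wab(ab^2)^sab^4]<[wab^2(ab^2)^sab^3]$; (2) $[wab^4(ab^2)^sab]<[wab^3(ab^2)^sab^2]$, provided $w$ is empty or begins with $a$.
   Context: Words are finite strings over $\{a,b\}$; $\phi$ is the monoid homomorphism with $\phi(a)=A,\phi(b)=B$, and $[w]=\mathrm{tr}(\phi(w))$. Fixed points are for the Möbius action on $\partial\mathcal{H}=\mathbb{P}^1\mathbb{R}$; $\alpha^\pm$ ($\beta^\pm$) are the attracting/repelling fixed points of $A$ ($B$), both equal to the unique fixed point if parabolic. With $\partial\mathcal{H}$ cyclically ordered and $[\alpha,\beta]$ the closed counterclockwise interval from $\alpha$ to $\beta$, let $I^+=\{\alpha^+\}$ if $\alpha^+=\beta^+$, and otherwise the one of $[\alpha^+,\beta^+],[\beta^+,\alpha^+]$ mapped into itself by both $A$ and $B$ (if it exists); define $I^-$ likewise with $A^{-1},B^{-1},\alpha^-,\beta^-$. The pair is coherently oriented if both exist, and well oriented if $A,B$ is coherently oriented but $A,B^{-1}$ is not. *)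

From HB Require Import structures.
From mathcomp Require Import all_boot all_order all_algebra.
From mathcomp Require Import Rstruct.
From Stdlib Require Import Rdefinitions.

Set Implicit Arguments.
Unset Strict Implicit.
Unset Printing Implicit Defensive.

Import Order.TTheory GRing.Theory Num.Theory.
Local Open Scope ring_scope.

Definition SL2Znn (M : 'M[int]_2) : Prop :=
  \det M = 1 /\ (forall i j, 0 <= M i j).

Inductive letter := La | Lb.

Definition word := seq letter.

Definition phi (A B : 'M[int]_2) (w : word) : 'M[int]_2 :=
  foldr (fun l M => (match l with La => A | Lb => B end) *m M) 1%:M w.

Definition trw (A B : 'M[int]_2) (w : word) : int := \tr (phi A B w).

Definition wpow (u : word) (s : nat) : word := flatten (nseq s u).

(* The real projective line P^1 R = boundary of H.  A point is represented
   by a nonzero column vector v = (x, y) in R^2 (standing for x / y, with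
   y = 0 standing for infinity); a matrix M acts by the Moebius map,
   i.e. v |-> M *m v. *)
Definition realR := Rdefinitions.R.
Definition pt := 'cV[realR]_2.

Definition det2 (u v : pt) : realR := \det (row_mx u v).

Definition same_pt (u v : pt) : Prop := det2 u v = 0.

(* strict cyclic (counterclockwise = increasing on R u {oo}) order of
   three distinct points u, w, v *)
Definition cyc (u w v : pt) : Prop := 0 < det2 u w * det2 w v * det2 v u.

Definition in_ccw (u v w : pt) : Prop :=
  w != 0 /\ (same_pt w u \/ same_pt w v \/ cyc u w v).

Definition interval_inv (M : 'M[realR]_2) (u v : pt) : Prop :=
  forall w : pt, in_ccw u v w -> in_ccw u v (M *m w).

(* attracting / repelling fixed points: eigenvectors of eigenvalues of
   absolute value >= 1 (resp. <= 1); for a parabolic matrix both are the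
   unique fixed point *)
Definition attr_fix (M : 'M[realR]_2) (v : pt) : Prop :=
  v != 0 /\ exists l : realR, M *m v = l *: v /\ 1 <= `|l|.
Definition rep_fix (M : 'M[realR]_2) (v : pt) : Prop :=
  v != 0 /\ exists l : realR, M *m v = l *: v /\ `|l| <= 1.

(* the interval I (built from fixed points u of M and v of N) exists:
   either u = v (I = {u}) or one of [u,v], [v,u] is mapped into itself
   by both M and N *)
Definition I_exists (M N : 'M[realR]_2) (u v : pt) : Prop :=
  same_pt u v
  \/ (interval_inv M u v /\ interval_inv N u v)
  \/ (interval_inv M v u /\ interval_inv N v u).

Definition coherent (A B : 'M[realR]_2) : Prop :=
  (exists ap bp : pt, attr_fix A ap /\ attr_fix B bp /\ I_exists A B ap bp)
  /\ (exists am bm : pt, rep_fix A am /\ rep_fix B bm /\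
        I_exists (invmx A) (invmx B) am bm).

Definition toR (M : 'M[int]_2) : 'M[realR]_2 := map_mx (fun z : int => z%:~R) M.

Definition well_oriented (A B : 'M[int]_2) : Prop :=
  coherent (toR A) (toR B) /\ ~ coherent (toR A) (invmx (toR B)).

(* Write C = ab^2, P = ab and Q = b^2, so that the two words of (1) are
   C^(s+1) P Q and P C^(s+1) Q.  As det C = 1, Cayley-Hamilton gives
   C^(s+1) P Q - P C^(s+1) Q = U_s(tr C) (C P Q - P C Q) with U_s the Chebyshev
   polynomials of the second kind, and U_s(c) >= 1 for c >= 2; hence (1)
   reduces to the positivity of the entries of ab^2ab^3 - abab^4.  Expanding
   this matrix in the basis 1, A, B, AB, its coordinates are polynomials in
   x = tr A and y = tr B (as tr AB = tr B^2 = y^2 - 2), whose signs for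
   2 <= x < y force positive entries.  Part (2) is part (1) in disguise: the
   trace of a word is invariant under cyclic rotation and under reversal, the
   latter because it depends only on det A, det B, tr A, tr B and tr AB, which
   transposition preserves. *)

From HB Require Import structures.
From mathcomp Require Import all_boot all_order all_algebra.
From mathcomp Require Import ring lra zify.

Set Implicit Arguments.
Unset Strict Implicit.
Unset Printing Implicit Defensive.

Import Order.TTheory GRing.Theory Num.Theory.
Local Open Scope ring_scope.

Lemma ord2P (P : 'I_2 -> Prop) : P 0 -> P 1 -> forall i, P i.
Proof.
move=> P0 P1 [[|[|//]] lt_i2].
- by rewrite (_ : Ordinal lt_i2 = 0) //; apply/val_inj.
- by rewrite (_ : Ordinal lt_i2 = 1) //; apply/val_inj.
Qed.

Lemma big_ord2 (V : nmodType) (F : 'I_2 -> V) : \sum_(i < 2) F i = F 0 + F 1.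
Proof. by rewrite big_ord_recl big_ord1; congr (_ + F _); apply/val_inj. Qed.

Section Matrix2.

Variable R : comNzRingType.
Implicit Types M N : 'M[R]_2.

Lemma mulmx2E M N i j : (M *m N) i j = M i 0 * N 0 j + M i 1 * N 1 j.
Proof. by rewrite mxE big_ord2. Qed.

Lemma mxtrace2 M : \tr M = M 0 0 + M 1 1.
Proof. by rewrite /mxtrace big_ord2. Qed.

Lemma det_mx2 M : \det M = M 0 0 * M 1 1 - M 0 1 * M 1 0.
Proof.
rewrite (expand_det_row _ 0) big_ord2 /cofactor !det_mx11 !mxE /=.
rewrite (_ : lift 0 0 = 1); last exact/val_inj.
rewrite (_ : lift 1 0 = 0); last exact/val_inj.
by rewrite expr0 expr1 mul1r mulN1r mulrN.
Qed.

End Matrix2.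

Ltac mx2_entrywise :=
  apply/matrixP; apply: ord2P; apply: ord2P;
  rewrite ?mxtrace2 ?det_mx2 !mxE ?big_ord2 ?mxE ?big_ord2 ?mxE /=.

Section Matrix2CayleyHamilton.

Variable R : comNzRingType.
Implicit Types M : 'M[R]_2.

Lemma mx2_Cayley_Hamilton M : M * M = \tr M *: M - \det M *: 1.
Proof. by mx2_entrywise; ring. Qed.

Lemma mxtrace2_sqr M : \tr (M * M) = \tr M ^+ 2 - 2 * \det M.
Proof. by rewrite !mxtrace2 det_mx2 !mulmx2E; ring. Qed.

End Matrix2CayleyHamilton.

Fixpoint chebU (R : nzRingType) (c : R) (n : nat) : R :=
  match n with
  | 0 => 1
  | 1 => c
  | (n'.+1 as n1).+1 => c * chebU c n1 - chebU c n'
  end.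

Lemma chebUSS (R : nzRingType) (c : R) n :
  chebU c n.+2 = c * chebU c n.+1 - chebU c n.
Proof. by []. Qed.

Lemma chebU_ge1 (R : realDomainType) (c : R) n : 2 <= c -> 1 <= chebU c n.
Proof.
move=> c_ge2; suff /andP[] : 1 <= chebU c n <= chebU c n.+1 by [].
elim: n => [|n /andP[ge1 le_n]]; first by apply/andP; split=> /=; lra.
rewrite chebUSS; apply/andP; split; first exact: le_trans le_n.
nra.
Qed.

Lemma mxpow_commutator_chebU (R : comNzRingType) (C P Q : 'M[R]_2) :
  \det C = 1 -> forall n,
  C ^+ n.+1 * (P * Q) - P * C ^+ n.+1 * Q
    = chebU (\tr C) n *: (C * (P * Q) - P * C * Q).
Proof.
move=> detC.
pose g M := M * (P * Q) - P * M * Q.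
have g1 : g 1 = 0 by rewrite /g mul1r mulr1 subrr.
have gBZ a M N : g (a *: M - N) = a *: g M - g N.
  rewrite /g mulrBl mulrBr mulrBl -!scalerAl -scalerAr -scalerAl scalerBr.
  by rewrite !opprB addrACA [RHS]addrACA [- _ - _]addrC.
have powSS n : C ^+ n.+2 = \tr C *: C ^+ n.+1 - C ^+ n.
  by rewrite !exprS mulrA mx2_Cayley_Hamilton detC scale1r mulrBl -scalerAl mul1r.
suff gpow : forall n, g (C ^+ n.+1) = chebU (\tr C) n *: g C /\
                      g (C ^+ n.+2) = chebU (\tr C) n.+1 *: g C.
  by move=> n; case: (gpow n).
elim=> [|n [IH1 IH2]].
  by rewrite expr1 scale1r powSS expr1 expr0 gBZ g1 subr0.
by split=> //; rewrite powSS gBZ IH1 IH2 chebUSS scalerA scalerBl.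
Qed.

Implicit Types (A B M N U : 'M[int]_2) (u v p w : word).

Section Words.

Variables A B : 'M[int]_2.

Lemma phi_cat u v : phi A B (u ++ v) = phi A B u *m phi A B v.
Proof. by elim: u => [|l u IH] /=; rewrite ?mul1mx // IH mulmxA. Qed.

Lemma phi_rcons u l :
  phi A B (rcons u l) = phi A B u *m (if l is La then A else B).
Proof. by rewrite -cats1 phi_cat /= mulmx1; case: l. Qed.

Lemma phi_wpow u n : phi A B (wpow u n) = phi A B u ^+ n.
Proof. by elim: n => [|n IH]; rewrite ?expr0 // exprS -IH -[_ * _]phi_cat. Qed.

Lemma phi_rev w : phi A B (rev w) = (phi A^T B^T w)^T.
Proof.
elim: w => [|l w IH] /=; first by rewrite trmx1.
by rewrite rev_cons phi_rcons IH trmx_mul; case: l; rewrite trmxK.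
Qed.

Lemma trw_rot u v : trw A B (u ++ v) = trw A B (v ++ u).
Proof. by rewrite /trw !phi_cat mxtrace_mulC. Qed.

End Words.

Lemma wpowS u n : wpow u n.+1 = u ++ wpow u n.
Proof. by []. Qed.

Lemma rev_wpow u n : rev (wpow u n) = wpow (rev u) n.
Proof. by rewrite /wpow rev_flatten map_nseq rev_nseq. Qed.

Lemma cons_wpow_rcons x v n :
  x :: wpow (rcons v x) n = rcons (wpow (x :: v) n) x.
Proof. by elim: n => [|n IH] //; rewrite !wpowS cat_rcons IH rcons_cat. Qed.

(* By Cayley-Hamilton every word in A and B is a combination of 1, A, B and AB. *)
Record coords := Coords { c1 : int; cA : int; cB : int; cAB : int }.

Definition comb A B (q : coords) : 'M[int]_2 :=
  c1 q *: 1%:M + cA q *: A + cB q *: B + cAB q *: (A *m B).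

(* Right multiplication by A and by B in these coordinates, for
   dA = det A, dB = det B, x = tr A, y = tr B, z = tr AB: it only uses
   A^2 = x A - dA, B^2 = y B - dB and BA = - AB + y A + x B + (z - x y). *)
Definition coords_mulA (dA x y z : int) (q : coords) : coords :=
  Coords (- dA * cA q + (z - x * y) * cB q - dA * y * cAB q)
         (c1 q + x * cA q + y * cB q + z * cAB q)
         (x * cB q + dA * cAB q)
         (- cB q).

Definition coords_mulB (dB y : int) (q : coords) : coords :=
  Coords (- dB * cB q) (- dB * cAB q) (c1 q + y * cB q) (cA q + y * cAB q).

Definition fricke (dA dB x y z : int) w : coords :=
  foldl (fun q l => if l is La then coords_mulA dA x y z q else coords_mulB dB y q)
        (Coords 1 0 0 0) w.

Definition coords_tr (x y z : int) (q : coords) : int :=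
  c1 q * 2 + cA q * x + cB q * y + cAB q * z.

Section FrickeCoordinates.

Variables A B : 'M[int]_2.
Local Notation x := (\tr A).
Local Notation y := (\tr B).
Local Notation z := (\tr (A *m B)).

Lemma comb_mulA q : comb A B q *m A = comb A B (coords_mulA (\det A) x y z q).
Proof. by rewrite /comb /coords_mulA /=; mx2_entrywise; ring. Qed.

Lemma comb_mulB q : comb A B q *m B = comb A B (coords_mulB (\det B) y q).
Proof. by rewrite /comb /coords_mulB /=; mx2_entrywise; ring. Qed.

Lemma phi_fricke w : phi A B w = comb A B (fricke (\det A) (\det B) x y z w).
Proof.
elim/last_ind: w => [|w l IH]; first by rewrite /comb /= scale1r !scale0r !addr0.
by rewrite phi_rcons IH /fricke foldl_rcons; case: l; rewrite ?comb_mulA ?comb_mulB.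
Qed.

Lemma mxtrace_comb q : \tr (comb A B q) = coords_tr x y z q.
Proof. by rewrite /comb !mxtraceD !mxtraceZ mxtrace1 /coords_tr; ring. Qed.

Lemma trw_fricke w :
  trw A B w = coords_tr x y z (fricke (\det A) (\det B) x y z w).
Proof. by rewrite /trw phi_fricke mxtrace_comb. Qed.

End FrickeCoordinates.

Lemma trw_rev A B w : trw A B (rev w) = trw A B w.
Proof.
rewrite {1}/trw phi_rev mxtrace_tr -/(trw _ _ w) !trw_fricke !det_tr !mxtrace_tr.
by rewrite -trmx_mul mxtrace_tr mxtrace_mulC.
Qed.

Lemma trw_cons_rev A B x u : trw A B (x :: u) = trw A B (x :: rev u).
Proof. by rewrite -trw_rev rev_cons -cats1 trw_rot. Qed.

Lemma trw_cons_cat_rev A B x p u :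
  trw A B (x :: p ++ x :: u) = trw A B (x :: rev p ++ x :: rev u).
Proof. by rewrite trw_cons_rev rev_cat rev_cons cat_rcons -cat_cons trw_rot. Qed.

Lemma SL2Znn_mul M N : SL2Znn M -> SL2Znn N -> SL2Znn (M *m N).
Proof.
move=> [detM geM] [detN geN]; split; first by rewrite det_mulmx detM detN mulr1.
by move=> i j; rewrite mulmx2E addr_ge0 ?mulr_ge0.
Qed.

Lemma phi_SL2Znn A B w : SL2Znn A -> SL2Znn B -> SL2Znn (phi A B w).
Proof.
move=> sA sB; elim: w => [|l w IH] /=; last by case: l; apply: SL2Znn_mul.
by split=> [|i j]; rewrite ?det1 // mxE; case: (i == j).
Qed.

Lemma SL2Znn_diag_ge1 M : SL2Znn M -> forall i, 1 <= M i i.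
Proof.
move=> [detM geM]; rewrite det_mx2 /= in detM; apply: ord2P.
all: have := mulr_ge0 (geM 0 1) (geM 1 0); have := geM 0 0; have := geM 1 1; nia.
Qed.

Lemma SL2Znn_tr_ge2 M : SL2Znn M -> 2 <= \tr M.
Proof.
move=> /SL2Znn_diag_ge1 geM; rewrite mxtrace2 /=.
by have := geM 0; have := geM 1; lia.
Qed.

Lemma SL2Znn_ge1 M : SL2Znn M -> 3 <= \tr M -> forall i j, 1 <= M i j.
Proof.
move=> sM; have [detM geM] := sM; have ge1 := SL2Znn_diag_ge1 sM.
rewrite det_mx2 /= in detM; rewrite mxtrace2 /= => trM; apply: ord2P; apply: ord2P.
all: have := ge1 0; have := ge1 1; have := geM 0 1; have := geM 1 0; nia.
Qed.

Lemma mxtrace_mul_gt0 U N :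
  SL2Znn U -> (forall i j, 0 < N i j) -> 0 < \tr (U *m N).
Proof.
move=> sU gtN; have [_ geU] := sU; have ge1 := SL2Znn_diag_ge1 sU.
rewrite mxtrace2 !mulmx2E /=.
have := ge1 0; have := geU 0 1; have := geU 1 0; have := geU 1 1.
have := gtN 0 0; have := gtN 0 1; have := gtN 1 0; have := gtN 1 1.
nia.
Qed.

Lemma le_mulmx_ge1 A B :
  (forall i j, 0 <= A i j) -> (forall i j, 1 <= B i j) ->
  forall i j, A i j <= (A *m B) i j.
Proof.
move=> geA geB; apply: ord2P; apply: ord2P; rewrite mulmx2E /=.
all: have := geA 0 0; have := geA 0 1; have := geA 1 0; have := geA 1 1.
all: have := geB 0 0; have := geB 0 1; have := geB 1 0; have := geB 1 1; nia.
Qed.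

Lemma comb_gt0 A B q :
  SL2Znn A -> SL2Znn B -> 3 <= \tr B ->
  0 < cB q -> 0 <= cAB q -> 0 <= cA q + cAB q -> 0 < c1 q + cA q + cB q + cAB q ->
  forall i j, 0 < comb A B q i j.
Proof.
move=> sA sB trB gtB geAB geAAB gtsum i j.
have [_ geA] := sA; have geA1 := SL2Znn_diag_ge1 sA; have geB1 := SL2Znn_ge1 sB trB.
have leAAB := le_mulmx_ge1 geA geB1 i j.
have : (cA q + cAB q) * A i j <= cA q * A i j + cAB q * (A *m B) i j by nia.
rewrite /comb !mxE mulr_natr; have := geA i j; have := geB1 i j.
case: eqP => [<- | _] /=; last by nia.
have := geA1 i; nia.
Qed.

Lemma commutator_coords A B x y :
  \det A = 1 -> \det B = 1 -> \tr A = x -> \tr B = y -> \tr (A *m B) = y ^+ 2 - 2 ->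
  phi A B [:: La; Lb; Lb; La; Lb; Lb; Lb] - phi A B [:: La; Lb; La; Lb; Lb; Lb; Lb]
    = comb A B (Coords (- y) (x * y - y ^+ 2 + 2) (y ^+ 2 - 2)
                       ((y - x) * y ^+ 2 - 2 * y + x)).
Proof.
move=> detA detB trA trB trAB; rewrite !phi_fricke detA detB trA trB trAB /comb /=.
by apply/matrixP=> i j; rewrite !mxE; ring.
Qed.

Lemma commutator_gt0 A B :
  SL2Znn A -> SL2Znn B -> \tr A < \tr B -> \tr (A *m B) = \tr (B *m B) ->
  forall i j,
  0 < (phi A B [:: La; Lb; Lb; La; Lb; Lb; Lb]
       - phi A B [:: La; Lb; La; Lb; Lb; Lb; Lb]) i j.
Proof.
move=> sA sB ltAB trAB; have [detA _] := sA; have [detB _] := sB.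
have trA := SL2Znn_tr_ge2 sA.
rewrite [RHS]mxtrace2_sqr detB mulr1 in trAB.
rewrite (commutator_coords detA detB erefl erefl trAB).
set x := \tr A in trA ltAB *; set y := \tr B in ltAB trAB *.
by apply: comb_gt0 => //=; [lia | nia ..].
Qed.

Definition frame (k l s : nat) : word :=
  La :: nseq k Lb ++ wpow [:: La; Lb; Lb] s ++ La :: nseq l Lb.

Lemma trw_frame_lt A B w s :
  SL2Znn A -> SL2Znn B -> \tr A < \tr B -> \tr (A *m B) = \tr (B *m B) ->
  trw A B (w ++ frame 1 4 s) < trw A B (w ++ frame 2 3 s).
Proof.
move=> sA sB ltAB trAB.
set C := phi A B [:: La; Lb; Lb].
set P := phi A B [:: La; Lb].
set Q := phi A B [:: Lb; Lb].
have phi14 : phi A B (frame 1 4 s) = P * C ^+ s.+1 * Q.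
  rewrite (_ : frame 1 4 s =
    [:: La; Lb] ++ wpow [:: La; Lb; Lb] s ++ [:: La; Lb; Lb] ++ [:: Lb; Lb]) //.
  by rewrite !phi_cat phi_wpow exprSr !mulmxE !mulrA.
have phi23 : phi A B (frame 2 3 s) = C ^+ s.+1 * (P * Q).
  rewrite (_ : frame 2 3 s =
    [:: La; Lb; Lb] ++ wpow [:: La; Lb; Lb] s ++ [:: La; Lb] ++ [:: Lb; Lb]) //.
  by rewrite !phi_cat phi_wpow exprS !mulmxE !mulrA.
have detC : \det C = 1 by have [] := phi_SL2Znn [:: La; Lb; Lb] sA sB.
have trC : 2 <= \tr C := SL2Znn_tr_ge2 (phi_SL2Znn _ sA sB).
have commCP : C * (P * Q) - P * C * Q
    = phi A B [:: La; Lb; Lb; La; Lb; Lb; Lb] - phi A B [:: La; Lb; La; Lb; Lb; Lb; Lb].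
  by rewrite -!mulmxE -!phi_cat.
rewrite -subr_gt0 /trw !phi_cat phi14 phi23 -raddfB /= -mulmxBr.
rewrite mxpow_commutator_chebU // -scalemxAr mxtraceZ commCP mulr_gt0 //.
  exact: lt_le_trans (chebU_ge1 _ trC).
by apply: mxtrace_mul_gt0; [exact: phi_SL2Znn | exact: commutator_gt0].
Qed.

Lemma cons_rev_frame k l s :
  La :: rev (nseq k Lb ++ wpow [:: La; Lb; Lb] s ++ La :: nseq l Lb) = frame l k s.
Proof.
rewrite !rev_cat rev_cons !rev_nseq rev_wpow (_ : rev _ = rcons [:: Lb; Lb] La) //.
by rewrite cat_rcons cons_wpow_rcons -catA cat_rcons.
Qed.

Lemma trw_frame_swap A B k l s : trw A B (frame k l s) = trw A B (frame l k s).
Proof. by rewrite trw_cons_rev cons_rev_frame. Qed.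

Lemma trw_cons_frame_swap A B p k l s :
  trw A B (La :: p ++ frame k l s) = trw A B (La :: rev p ++ frame l k s).
Proof. by rewrite trw_cons_cat_rev cons_rev_frame. Qed.

Theorem lemma6p2 (A B : 'M[int]_2) (w : word) (s : nat) :
  SL2Znn A -> SL2Znn B ->
  A *m B != B *m A ->
  well_oriented A B ->
  \tr A < \tr B ->
  trw A B [:: La; Lb] = trw A B [:: Lb; Lb] ->
  (* (1) [w ab (ab^2)^s ab^4] < [w ab^2 (ab^2)^s ab^3] *)
  trw A B (w ++ [:: La; Lb] ++ wpow [:: La; Lb; Lb] s ++ [:: La; Lb; Lb; Lb; Lb])
    < trw A B (w ++ [:: La; Lb; Lb] ++ wpow [:: La; Lb; Lb] s ++ [:: La; Lb; Lb; Lb])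
  /\
  (* (2) [w ab^4 (ab^2)^s ab] < [w ab^3 (ab^2)^s ab^2], if w is empty or begins with a *)
  ((w = [::] \/ exists w', w = La :: w') ->
   trw A B (w ++ [:: La; Lb; Lb; Lb; Lb] ++ wpow [:: La; Lb; Lb] s ++ [:: La; Lb])
     < trw A B (w ++ [:: La; Lb; Lb; Lb] ++ wpow [:: La; Lb; Lb] s ++ [:: La; Lb; Lb])).
Proof.
move=> sA sB _ _ ltAB trABB.
have trAB : \tr (A *m B) = \tr (B *m B) by move: trABB; rewrite /trw /= !mulmx1.
have part1 v : trw A B (v ++ frame 1 4 s) < trw A B (v ++ frame 2 3 s).
  exact: trw_frame_lt.
split; first exact: part1.
case=> [->|[p ->]].
  change (trw A B (frame 4 1 s) < trw A B (frame 3 2 s)).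
  by rewrite (trw_frame_swap _ _ 4) (trw_frame_swap _ _ 3); apply: (part1 [::]).
change (trw A B (La :: p ++ frame 4 1 s) < trw A B (La :: p ++ frame 3 2 s)).
rewrite (trw_cons_frame_swap _ _ _ 4) (trw_cons_frame_swap _ _ _ 3).
exact: (part1 (La :: rev p)).
Qed.
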